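(* Let $\mathcal{F}$ satisfy the standard conditions. Then the set $\mathbb{R}_{\mathcal{F}}$ of $\mathcal{F}$-computable real numbers is a subfield of $\mathbb{R}$.
   Context: $\mathbb{N}=\{0,1,2,\dots\}$. $\mathcal{F}$ is a set of functions $\mathbb{N}^n\to\mathbb{N}$; it satisfies the standard conditions if it contains the zero function, the successor, all projections $P^n_i$, addition, multiplication and modified subtraction $x\dot- y=\max(x-y,0)$, and is closed under composition. An $\mathcal{F}$-sequence is $A:\mathbb{N}\to\mathbb{Q}$, $A(x)=\frac{f(x)-g(x)}{h(x)+1}$, with $f,g,h:\mathbb{N}\to\mathbb{N}$ in $\mathcal{F}$. A real number $\alpha$ is $\mathcal{F}$-computable if there is an $\mathcal{F}$-sequence $A$ with $|A(x)-\alpha|\le\frac1{x+1}$ for all $x$. *)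

From HB Require Import structures.
From mathcomp Require Import all_boot all_order all_algebra.
From mathcomp Require Import reals.
Set Implicit Arguments. Unset Strict Implicit. Unset Printing Implicit Defensive.
Import Order.TTheory GRing.Theory Num.Theory.

Definition fclass := forall n : nat, (n.-tuple nat -> nat) -> Prop.

Definition un (f : nat -> nat) : 1.-tuple nat -> nat := fun x => f (tnth x ord0).
Definition bin (f : nat -> nat -> nat) : 2.-tuple nat -> nat :=
  fun x => f (tnth x ord0) (tnth x ord_max).

Definition fcomp (m n : nat) (f : m.-tuple nat -> nat)
  (g : 'I_m -> n.-tuple nat -> nat) : n.-tuple nat -> nat :=
  fun x => f [tuple g i x | i < m].

Definition standard_conditions (F : fclass) : Prop :=
  [/\ F 1 (un (fun _ => 0%N)),
      F 1 (un S),
      (forall n (i : 'I_n), F n (fun x => tnth x i)),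
      [/\ F 2 (bin addn), F 2 (bin muln) & F 2 (bin subn)]
    & (forall m n (f : m.-tuple nat -> nat) (g : 'I_m -> n.-tuple nat -> nat),
         F m f -> (forall i, F n (g i)) -> F n (fcomp f g))].

Definition ev1 (f : 1.-tuple nat -> nat) (x : nat) : nat := f [tuple x].

Local Open Scope ring_scope.

Definition Fseq (R : realType) (f g h : 1.-tuple nat -> nat) (x : nat) : R :=
  ((ev1 f x)%:R - (ev1 g x)%:R) / ((ev1 h x).+1)%:R.

Definition F_computable (F : fclass) (R : realType) (alpha : R) : Prop :=
  exists f g h : 1.-tuple nat -> nat,
    [/\ F 1 f, F 1 g, F 1 h &
        forall x : nat, `|Fseq R f g h x - alpha| <= (x.+1%:R)^-1].

Definition is_subfield (K : fieldType) (S : K -> Prop) : Prop :=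
  [/\ S 0, S 1,
      (forall a b, S a -> S b -> S (a - b)),
      (forall a b, S a -> S b -> S (a * b))
    & (forall a, S a -> a != 0 -> S a^-1)].

From mathcomp Require Import all_boot all_order all_algebra.
From mathcomp Require Import reals zify ring lra.
From mathcomp Require Import boolp.

Set Implicit Arguments.
Unset Strict Implicit.
Unset Printing Implicit Defensive.

Import Order.TTheory GRing.Theory Num.Theory.

(* Approximate [a] and [b] by fractions [(u - v) / (w + 1)] with error
   [1 / (c (x + 1))] for a constant [c] of our choice, by precomposing the
   given approximations with the linear function [c x + c - 1].  Differences
   and products of such fractions are again such fractions with
   numerators and denominator built from [+] and [*], and the inverse of a
   positive fraction [(u - v) / (w + 1)] is [(w + 1) / ((u - v - 1) + 1)].
   The propagated errors are bounded by [2 e], [(|a| + |b| + 1) e] and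
   [2 e / a^2], so a suitable [c] brings them back below [1 / (x + 1)]. *)

Local Open Scope ring_scope.

Section Fractions.
Variable R : numFieldType.

Definition frac (a b c : nat) : R := (a%:R - b%:R) / c.+1%:R.

Lemma succ_mul_succ (c c' : nat) : (c * c' + c + c').+1 = (c.+1 * c'.+1)%N.
Proof. lia. Qed.

Lemma fracB (a b c a' b' c' : nat) :
  frac (a * c'.+1 + b' * c.+1) (b * c'.+1 + a' * c.+1) (c * c' + c + c')
  = frac a b c - frac a' b' c'.
Proof.
rewrite /frac succ_mul_succ !natrD !natrM.
by field; rewrite !nat1r !pnatr_eq0.
Qed.

Lemma fracM (a b c a' b' c' : nat) :
  frac (a * a' + b * b') (a * b' + b * a') (c * c' + c + c')
  = frac a b c * frac a' b' c'.
Proof.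
rewrite /frac succ_mul_succ !natrD !natrM.
by field; rewrite !nat1r !pnatr_eq0.
Qed.

Lemma frac_gt0 (a b c : nat) : (0 < frac a b c) = (b < a)%N.
Proof. by rewrite /frac pmulr_lgt0 ?invr_gt0 ?ltr0Sn // subr_gt0 ltr_nat. Qed.

Lemma fracV (a b c : nat) :
  (b < a)%N -> frac c.+1 0 (a - b - 1) = (frac a b c)^-1.
Proof.
move=> ltba; rewrite /frac invf_div subr0 subn1 prednK ?subn_gt0 //.
by rewrite natrB // ltnW.
Qed.

End Fractions.

Arguments frac {R}.

Section ErrorPropagation.
Variable R : realFieldType.
Implicit Types p q a b e : R.

Lemma ler_distB p q a b e : `|p - a| <= e -> `|q - b| <= e ->
  `|(p - q) - (a - b)| <= 2 * e.
Proof.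
move=> hp hq; have -> : p - q - (a - b) = (p - a) - (q - b) by ring.
by apply: le_trans (ler_normB _ _) _; lra.
Qed.

Lemma ler_distM p q a b e : `|p - a| <= e -> `|q - b| <= e -> e <= 1 ->
  `|p * q - a * b| <= (`|a| + `|b| + 1) * e.
Proof.
move=> hp hq e_le1.
have normp : `|p| <= `|a| + 1.
  by have := ler_normD (p - a) a; rewrite subrK; lra.
have -> : p * q - a * b = p * (q - b) + b * (p - a) by ring.
apply: le_trans (ler_normD _ _) _; rewrite !normrM.
have := ler_pM (normr_ge0 p) (normr_ge0 _) normp hq.
have := ler_wpM2l (normr_ge0 b) hp.
lra.
Qed.

Lemma ler_half_dist p a e : `|p - a| <= e -> 2 * e <= a -> a / 2 <= p.
Proof. by move=> hp h2e; have := ler_norm (a - p); rewrite distrC; lra. Qed.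

Lemma ler_distV p a e : 0 < a -> `|p - a| <= e -> 2 * e <= a ->
  `|p^-1 - a^-1| <= 2 * e / a ^+ 2.
Proof.
move=> a_gt0 hp h2e.
have p_ge := ler_half_dist hp h2e.
have pa_gt0 : 0 < p * a by apply: mulr_gt0 => //; lra.
have -> : p^-1 - a^-1 = (a - p) / (p * a).
  by field; rewrite !gt_eqF //; lra.
rewrite normrM normfV (gtr0_norm pa_gt0) ler_pdivrMr // mulrAC.
rewrite ler_pdivlMr ?exprn_gt0 // distrC.
have e_ge0 : 0 <= e := le_trans (normr_ge0 _) hp.
have := ler_wpM2r (sqr_ge0 a) hp.
have : 0 <= e * a * (2 * p - a) by rewrite !mulr_ge0 //; lra.
rewrite expr2; lra.
Qed.

Lemma ler_pM_invnM (K : R) (c x : nat) : 0 <= K -> K <= c.+1%:R ->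
  K * (c.+1 * x.+1)%:R^-1 <= x.+1%:R^-1.
Proof.
move=> K_ge0 K_le; rewrite natrM invfM mulrA ler_piMl ?invr_ge0 //.
by rewrite ler_pdivrMr ?ltr0Sn // mul1r.
Qed.

End ErrorPropagation.

Lemma tuple1E (t : 1.-tuple nat) : t = [tuple tnth t ord0].
Proof. by apply: eq_from_tnth => i; rewrite (ord1 i) [in RHS](tnth_nth 0). Qed.

Definition unary (F : fclass) (u : nat -> nat) : Prop := F 1%N (un u).

Section Computability.
Variable F : fclass.
Hypothesis HF : standard_conditions F.

Lemma unary_ev1 (f : 1.-tuple nat -> nat) : F f -> unary F (ev1 f).
Proof.
rewrite /unary; suff -> : un (ev1 f) = f by [].
by apply: funext => t; rewrite /un /ev1 [in RHS](tuple1E t).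
Qed.

Lemma unary_id : unary F id.
Proof. by case: HF => _ _ Hproj _ _; exact: (Hproj 1%N ord0). Qed.

Lemma unary_S : unary F S.
Proof. by case: HF. Qed.

Lemma unary_comp u k : unary F u -> unary F k -> unary F (fun x => u (k x)).
Proof.
case: HF => _ _ _ _ Hcomp Hu Hk.
have := Hcomp 1%N 1%N (un u) (fun _ => un k) Hu (fun _ => Hk).
rewrite /unary.
suff -> : fcomp (un u) (fun _ : 'I_1 => un k) = un (fun x => u (k x)) by [].
by apply: funext => t; rewrite /fcomp /un tnth_mktuple.
Qed.

Lemma unary_bin op u v : F (bin op) -> unary F u -> unary F v ->
  unary F (fun x => op (u x) (v x)).
Proof.
case: HF => _ _ _ _ Hcomp Hop Hu Hv.
pose g (i : 'I_2) := if val i == 0%N then un u else un v.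
have Hg i : F (g i) by rewrite /g; case: ifP.
have := Hcomp 2 1%N (bin op) g Hop Hg.
rewrite /unary; suff -> : fcomp (bin op) g = un (fun x => op (u x) (v x)) by [].
by apply: funext => t; rewrite /fcomp /bin /un !tnth_mktuple.
Qed.

Lemma unary_add u v : unary F u -> unary F v -> unary F (fun x => u x + v x)%N.
Proof. by case: HF => _ _ _ [Hadd _ _] _; exact: unary_bin. Qed.

Lemma unary_mul u v : unary F u -> unary F v -> unary F (fun x => u x * v x)%N.
Proof. by case: HF => _ _ _ [_ Hmul _] _; exact: unary_bin. Qed.

Lemma unary_sub u v : unary F u -> unary F v -> unary F (fun x => u x - v x)%N.
Proof. by case: HF => _ _ _ [_ _ Hsub] _; exact: unary_bin. Qed.

Lemma unary_succ u : unary F u -> unary F (fun x => (u x).+1).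
Proof. exact: unary_comp unary_S. Qed.

Lemma unary_cst n : unary F (fun _ => n).
Proof.
elim: n => [|n IHn]; first by case: HF.
exact: unary_succ IHn.
Qed.

Variable R : realType.

Definition approx_by (err : nat -> R) (a : R) : Prop :=
  exists u v w : nat -> nat, [/\ unary F u, unary F v, unary F w &
    forall x, `|frac (u x) (v x) (w x) - a| <= err x].

Lemma F_computableE (a : R) :
  F_computable F a <-> approx_by (fun x => x.+1%:R^-1) a.
Proof.
split=> [[f [g [h [Hf Hg Hh approx]]]] | [u [v [w [Hu Hv Hw approx]]]]].
- by exists (ev1 f), (ev1 g), (ev1 h); split; try apply: unary_ev1.
- by exists (un u), (un v), (un w).
Qed.

Lemma approx_by_speedup c a : approx_by (fun x => x.+1%:R^-1) a ->
  approx_by (fun x => (c.+1 * x.+1)%:R^-1) a.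
Proof.
case=> u [v [w [Hu Hv Hw approx]]].
pose k x := (c.+1 * x + c)%N.
have Hk : unary F k :=
  unary_add (unary_mul (unary_cst c.+1) unary_id) (unary_cst c).
exists (fun x => u (k x)), (fun x => v (k x)), (fun x => w (k x)).
split; try exact: unary_comp.
by move=> x; rewrite (_ : (c.+1 * x.+1)%N = (k x).+1) ?approx // /k; lia.
Qed.

Lemma F_computable0 : F_computable F (0 : R).
Proof.
apply/F_computableE; exists (fun=> 0%N), (fun=> 0%N), (fun=> 0%N).
split; try exact: unary_cst.
by move=> x; rewrite /frac subrr mul0r subrr normr0 invr_ge0.
Qed.

Lemma F_computable1 : F_computable F (1 : R).
Proof.
apply/F_computableE; exists (fun=> 1%N), (fun=> 0%N), (fun=> 0%N).
split; try exact: unary_cst.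
by move=> x; rewrite /frac subr0 divr1 subrr normr0 invr_ge0.
Qed.

Lemma F_computableB (a b : R) : F_computable F a -> F_computable F b ->
  F_computable F (a - b).
Proof.
move=> /F_computableE/(approx_by_speedup 1)
  [u [v [w [Hu Hv Hw approx_a]]]].
move=> /F_computableE/(approx_by_speedup 1)
  [u' [v' [w' [Hu' Hv' Hw' approx_b]]]].
apply/F_computableE.
exists (fun x => u x * (w' x).+1 + v' x * (w x).+1)%N.
exists (fun x => v x * (w' x).+1 + u' x * (w x).+1)%N.
exists (fun x => w x * w' x + w x + w' x)%N.
split; try by do ![apply: unary_add | apply: unary_mul | apply: unary_succ].
move=> x; rewrite fracB.
apply: le_trans (ler_distB (approx_a x) (approx_b x)) _.
by apply: ler_pM_invnM.
Qed.

Lemma F_computableM (a b : R) : F_computable F a -> F_computable F b ->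
  F_computable F (a * b).
Proof.
pose c := Num.Def.archi_bound (`|a| + `|b|).
have c_ge : `|a| + `|b| + 1 <= c.+1%:R.
  by rewrite -natr1 lerD2r ltW // archi_boundP // addr_ge0.
move=> /F_computableE/(approx_by_speedup c)
  [u [v [w [Hu Hv Hw approx_a]]]].
move=> /F_computableE/(approx_by_speedup c)
  [u' [v' [w' [Hu' Hv' Hw' approx_b]]]].
apply/F_computableE.
exists (fun x => u x * u' x + v x * v' x)%N.
exists (fun x => u x * v' x + v x * u' x)%N.
exists (fun x => w x * w' x + w x + w' x)%N.
split; try by do ![apply: unary_add | apply: unary_mul].
move=> x; rewrite fracM.
have e_le1 : (c.+1 * x.+1)%:R^-1 <= 1 :> R by rewrite invf_le1 ?ler1n ?ltr0Sn.
apply: le_trans (ler_distM (approx_a x) (approx_b x) e_le1) _.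
by apply: ler_pM_invnM => //; rewrite !addr_ge0.
Qed.

Lemma F_computableV_pos (a : R) : 0 < a -> F_computable F a ->
  F_computable F a^-1.
Proof.
move=> a_gt0.
have K1_ge0 : 0 <= 2 / a by rewrite divr_ge0 // ltW.
have K2_ge0 : 0 <= 2 / a ^+ 2 by rewrite divr_ge0 // exprn_ge0 // ltW.
pose c := Num.Def.archi_bound (2 / a + 2 / a ^+ 2).
have : 2 / a + 2 / a ^+ 2 < c%:R by apply: archi_boundP; rewrite addr_ge0.
rewrite -(ltrD2r 1) natr1 => c_gt.
have c_ge1 : 2 / a <= c.+1%:R by lra.
have c_ge2 : 2 / a ^+ 2 <= c.+1%:R by lra.
move=> /F_computableE/(approx_by_speedup c)
  [u [v [w [Hu Hv Hw approx_a]]]].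
apply/F_computableE.
exists (fun x => (w x).+1), (fun=> 0%N), (fun x => u x - v x - 1)%N.
split; try by do ![apply: unary_sub | apply: unary_succ | apply: unary_cst].
move=> x; have approx_ax := approx_a x.
have h2e : 2 * (c.+1 * x.+1)%:R^-1 <= a.
  have inv_le1 : x.+1%:R^-1 <= 1 :> R by rewrite invf_le1 ?ler1n ?ltr0Sn.
  have := le_trans (ler_pM_invnM x K1_ge0 c_ge1) inv_le1.
  by rewrite mulrAC ler_pdivrMr // mul1r.
have P_gt0 : 0 < frac (u x) (v x) (w x) :> R.
  by apply: (lt_le_trans _ (ler_half_dist approx_ax h2e)); rewrite divr_gt0.
rewrite fracV; last by rewrite frac_gt0 in P_gt0.
apply: le_trans (ler_distV a_gt0 approx_ax h2e) _.
by rewrite mulrAC; apply: ler_pM_invnM.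
Qed.

Lemma F_computableV (a : R) : F_computable F a -> a != 0 -> F_computable F a^-1.
Proof.
move=> Ca; case: (ltrgt0P a) => // [a_gt0 | a_lt0] _.
  exact: F_computableV_pos.
have Cna : F_computable F (0 - a).
  by apply: F_computableB; [apply: F_computable0|].
have Cinv : F_computable F (0 - a)^-1.
  by apply: F_computableV_pos Cna; rewrite sub0r oppr_gt0.
by have := F_computableB F_computable0 Cinv; rewrite !sub0r invrN opprK.
Qed.

End Computability.

Theorem mainTheorem12 (F : fclass) (R : realType) :
  standard_conditions F -> is_subfield (F_computable F (R := R)).
Proof.
move=> HF; split.
- exact: F_computable0.
- exact: F_computable1.
- exact: F_computableB.
- exact: F_computableM.
- exact: F_computableV.
Qed.
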